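(* Let $r,\theta$ be real numbers with $1\le\theta\le 0.5r\le 3\theta$, and let $q(x)=1-(r-\theta)x+(r-2\theta)x^2+\theta x^3$. Then $q$ has a real root $\alpha<-1$, and if $\beta,\gamma$ denote the remaining two (complex) roots of $q$, then $\beta\gamma$ is real and $0<\beta\gamma<1$.
   Context: Note $q(x)=1+rx(x-1)+\theta x(x-1)^2$ and $q(x)=(1-x/\alpha)(1-x/\beta)(1-x/\gamma)$ where $\alpha,\beta,\gamma$ are the roots of $q$ (counted with multiplicity). *)

From mathcomp Require Import all_boot all_order all_algebra.
From mathcomp Require Import complex.
Set Implicit Arguments. Unset Strict Implicit. Unset Printing Implicit Defensive.
Import Order.TTheory GRing.Theory Num.Theory.
Local Open Scope ring_scope.

Definition qcubic (F : nzRingType) (r theta : F) : {poly F} :=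
  1 - (r - theta)%:P * 'X + (r - 2 * theta)%:P * 'X^2 + theta%:P * 'X^3.

From mathcomp Require Import all_boot all_order all_algebra.
From mathcomp Require Import complex.
From mathcomp Require Import ring lra.
Import Order.TTheory GRing.Theory Num.Theory.
Local Open Scope ring_scope.

(* q(-1) = 1 + 2 (r - 2 theta) > 0 and q(-6) <= 1 - 42 theta < 0, so the
   intermediate value theorem gives a root alpha in (-6, -1). Comparing
   constant terms in q = theta (X - alpha)(X - beta)(X - gamma) gives
   1 = - theta alpha beta gamma, i.e. beta gamma = -1 / (theta alpha), which
   lies in (0, 1) because theta alpha < -1. *)

Lemma horner_qcubic (F : comNzRingType) (r theta x : F) :
  (qcubic r theta).[x]
  = 1 - (r - theta) * x + (r - 2 * theta) * x ^+ 2 + theta * x ^+ 3.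
Proof. by rewrite /qcubic !hornerE. Qed.

Lemma qcubic_at0 (F : comNzRingType) (r theta : F) : (qcubic r theta).[0] = 1.
Proof. by rewrite horner_qcubic; ring. Qed.

Lemma horner0_scaled_cubic (F : comNzRingType) (c a b g : F) :
  (c%:P * ('X - a%:P) * ('X - b%:P) * ('X - g%:P)).[0] = - (c * a * (b * g)).
Proof. by rewrite !hornerM !hornerXsubC hornerC; ring. Qed.

Lemma qcubic_at_m1_gt0 (R : realFieldType) (r theta : R) :
  theta <= r / 2 -> 0 < (qcubic r theta).[-1].
Proof. by rewrite horner_qcubic; lra. Qed.

Lemma qcubic_at_m6_lt0 (R : realFieldType) (r theta : R) :
  1 <= theta -> r / 2 <= 3 * theta -> (qcubic r theta).[-6] < 0.
Proof. by rewrite horner_qcubic; lra. Qed.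

Lemma qcubic_root_lt_m1 (R : rcfType) (r theta : R) :
  1 <= theta -> theta <= r / 2 -> r / 2 <= 3 * theta ->
  exists2 alpha, alpha < -1 & (qcubic r theta).[alpha] = 0.
Proof.
move=> theta_ge1 two_theta_le_r r_le_six_theta.
have q_m1_gt0 : 0 < (qcubic r theta).[-1] by apply: qcubic_at_m1_gt0.
have q_m6_lt0 : (qcubic r theta).[-6] < 0 by apply: qcubic_at_m6_lt0.
have [a /andP [_ a_le_m1] /eqP qa0] :=
  @poly_ivt R (qcubic r theta) (-6) (-1) ltac:(lra)
    (introT andP (conj (ltW q_m6_lt0) (ltW q_m1_gt0))).
exists a => //; rewrite lt_neqAle a_le_m1 andbT.
by apply: contraTneq q_m1_gt0 => <-; rewrite qa0 ltxx.
Qed.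

Lemma oppr_inv_lt_m1 (F : numFieldType) (k : F) : k < -1 -> 0 < - k^-1 < 1.
Proof.
move=> k_lt_m1; have nk_gt1 : 1 < - k by rewrite ltrNr.
have nk_gt0 : 0 < - k := lt_trans ltr01 nk_gt1.
by rewrite -invrN invr_gt0 invf_lt1 // nk_gt0 nk_gt1.
Qed.

Lemma mulr_eqN1 (F : fieldType) (k x : F) : k != 0 -> k * x = -1 -> x = - k^-1.
Proof. by move=> k_neq0 kx; rewrite -[x]mul1r -(mulVf k_neq0) -mulrA kx mulrN1. Qed.

Theorem mainTheorem6 (R : rcfType) (r theta : R) :
  1 <= theta -> theta <= r / 2 -> r / 2 <= 3 * theta ->
  exists alpha : R, alpha < -1 /\ (qcubic r theta).[alpha] = 0 /\
    forall beta gamma : R[i],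
      qcubic (r%:C)%C (theta%:C)%C
        = (theta%:C)%C%:P * ('X - (alpha%:C)%C%:P) * ('X - beta%:P) * ('X - gamma%:P) ->
      exists t : R, beta * gamma = (t%:C)%C /\ 0 < t /\ t < 1.
Proof.
move=> theta_ge1 two_theta_le_r r_le_six_theta.
have [alpha alpha_lt_m1 q_alpha] :=
  @qcubic_root_lt_m1 R r theta theta_ge1 two_theta_le_r r_le_six_theta.
exists alpha; do 2!split=> //; move=> beta gamma q_factor.
have ta_lt_m1 : theta * alpha < -1 by nra.
have ta_neq0 : ((theta * alpha)%:C)%C != 0.
  by rewrite (inj_eq (@complexI R)); apply: contraTneq ta_lt_m1 => ->; lra.
have const_term := congr1 (horner^~ 0) q_factor.
rewrite qcubic_at0 horner0_scaled_cubic -rmorphM /= in const_term.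
have bg_eq : beta * gamma = - ((theta * alpha)%:C)%C^-1.
  by apply: mulr_eqN1 => //; rewrite -[LHS]opprK -const_term.
exists (- (theta * alpha)^-1); split; last by apply/andP/oppr_inv_lt_m1.
by rewrite bg_eq rmorphN fmorphV.
Qed.
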